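(* Let $f: \mathbb{R}^n \to \mathbb{R}^n$ be topical and $x \in \mathbb{R}^n$. There exists $1 \le i \le n$ such that for all $k \in \mathbb{N}$, $x_i + k\,\overline{\chi}(f) \le f^k_i(x)$.
   Context: $f$ is topical if $f(x+h) = f(x)+h$ for all $h\in\mathbb{R}$ (scalar added to each coordinate) and $x\le y$ componentwise implies $f(x)\le f(y)$. The upper cycle time is $\overline{\chi}(f) = \lim_{k\to\infty} \max_i f^k_i(x)/k$, which exists and is independent of $x$. *)

From mathcomp Require Import all_boot all_order all_algebra.
From mathcomp Require Import all_classical all_reals all_analysis.
Set Implicit Arguments. Unset Strict Implicit. Unset Printing Implicit Defensive.
Import Order.TTheory GRing.Theory Num.Theory.
Import numFieldNormedType.Exports.
Local Open Scope ring_scope.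

(* Maximum coordinate of a vector (for n = 0 it is irrelevant; we put 0). *)
Definition vmax (R : realType) (n : nat) : ('I_n -> R) -> R :=
  match n return ('I_n -> R) -> R with
  | 0 => fun _ => 0
  | m.+1 => fun v => \big[Num.max/v ord0]_(i < m.+1) v i
  end.

Definition topical (R : realType) (n : nat) (f : ('I_n -> R) -> ('I_n -> R)) : Prop :=
  (forall (x : 'I_n -> R) (h : R) (i : 'I_n), f (fun j => x j + h) i = f x i + h) /\
  (forall (x y : 'I_n -> R), (forall j, x j <= y j) -> forall i, f x i <= f y i).

(* Upper cycle time: lim_{k -> oo} max_i f^k_i(x) / k, taken at x = 0
   (the limit exists and does not depend on x for topical f). *)
Definition upper_cycle_time (R : realType) (n : nat)
  (f : ('I_n -> R) -> ('I_n -> R)) : R :=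
  limn (fun k : nat => vmax (iter k f (fun _ => 0)) / k%:R).

From mathcomp Require Import all_boot all_order all_algebra.
From mathcomp Require Import all_classical all_reals all_analysis.
From mathcomp Require Import lra.
Import Order.TTheory GRing.Theory Num.Theory numFieldNormedType.Exports.
Local Open Scope classical_set_scope.
Local Open Scope ring_scope.

(* If every coordinate i eventually falls below x_i + k chi, say at time k_i,
   then it does so at some uniform rate mu < chi.  The pointwise minimum y of
   f^j(x) - j mu over 0 <= j <= max_i k_i is then a sub-eigenvector,
   f(y) <= y + mu, and iterating gives chi <= mu, a contradiction.  The cycle
   time is a genuine limit by Fekete's lemma applied to the subadditive
   sequence max_i f^k_i(0). *)

Lemma near_infty_divn_le {R : realType} (c e : R) : 0 < e ->
  \forall k \near \oo, c / k%:R <= e.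
Proof.
move=> e0; near=> k.
have ck : `|c| / e < k%:R by near: k; exact: nbhs_infty_gtr.
have k0 : 0 < k%:R :> R by apply: le_lt_trans _ ck; rewrite divr_ge0 // ltW.
rewrite ler_pdivrMr // mulrC -ler_pdivrMr //.
apply: le_trans _ (ltW ck); rewrite ler_pM2r ?invr_gt0 // ler_norm.
Unshelve. all: by end_near.
Qed.

Section Fekete.
Context {R : realType} {a : nat -> R} {m : R}.
Hypotheses (a0 : a 0 <= 0) (a_subadd : forall k l, a (k + l)%N <= a k + a l)
  (a_lb : forall k, k%:R * m <= a k).

Lemma subadditive_mulr q k : a (q * k)%N <= q%:R * a k.
Proof.
elim: q => [|q IH]; first by rewrite mul0n mul0r.
rewrite mulSn -(add1n q) natrD mulrDl mul1r.
exact: le_trans (a_subadd _ _) (lerD (lexx _) IH).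
Qed.

Lemma subadditive_le_affine k l : (0 < l)%N ->
  a k <= k%:R * (a l / l%:R) + l%:R * (`|a 1| + `|a l / l%:R|).
Proof.
move=> l0; set u := a l / l%:R.
have al : a l = l%:R * u by rewrite /u mulrC divfK // pnatr_eq0 -lt0n.
have /(congr1 (GRing.natmul (1 : R))) := divn_eq k l.
rewrite natrD natrM => kE.
set q := (k %/ l)%N in kE *; set r := (k %% l)%N in kE *.
have rl : r%:R <= l%:R :> R by rewrite ler_nat ltnW // ltn_pmod.
have ak : a k <= q%:R * a l + r%:R * a 1.
  rewrite [k](divn_eq k l); apply: le_trans (a_subadd _ _) _.
  apply: lerD; first exact: subadditive_mulr.
  by have := subadditive_mulr r 1; rewrite muln1.
have ru : - (r%:R * u) <= l%:R * `|u|.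
  rewrite -mulrN; apply: le_trans (_ : r%:R * `|u| <= _).
    by rewrite ler_wpM2l // -normrN ler_norm.
  by rewrite ler_wpM2r.
have ra : r%:R * a 1 <= l%:R * `|a 1|.
  apply: le_trans (_ : r%:R * `|a 1| <= _).
    by rewrite ler_wpM2l // ler_norm.
  by rewrite ler_wpM2r.
have : q%:R * a l = k%:R * u - r%:R * u by rewrite al mulrA -mulrBl kE addrK.
lra.
Qed.

Lemma subadditive_cvg_inf :
  (fun k => a k / k%:R) @ \oo --> inf [set a k / k%:R | k in [set k | (0 < k)%N]].
Proof.
set S := [set _ | _ in _]; set L := inf S.
have S_lb : has_lbound S.
  by exists m => _ [k /= k0 <-]; rewrite ler_pdivlMr ?ltr0n // mulrC.
have S_inf : has_inf S by split; [exists (a 1 / 1%:R), 1%N | ].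
apply/cvgrPdist_le => e e0.
have [_ [l /= l0 <-] al] := inf_adherent (divr_gt0 e0 (ltr0n R 2)) S_inf.
rewrite -/L in al.
set D := l%:R * (`|a 1| + `|a l / l%:R|).
near=> k.
have k0 : (0 < k)%N by near: k; exact: nbhs_infty_gt.
have kR : 0 < k%:R :> R by rewrite ltr0n.
have Lk : L <= a k / k%:R by apply: ge_inf => //; exists k.
have Dk : D / k%:R <= e / 2 by near: k; apply: near_infty_divn_le; lra.
have : a k / k%:R <= a l / l%:R + D / k%:R.
  rewrite ler_pdivrMr // mulrDl divfK ?gt_eqF // mulrC.
  exact: subadditive_le_affine.
rewrite ler0_norm ?subr_le0 //; lra.
Unshelve. all: by end_near.
Qed.

End Fekete.

Section Topical.
Context {R : realType} {n : nat} {f : ('I_n -> R) -> ('I_n -> R)}.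
Hypothesis hf : topical f.

Lemma topical_iter_shift k x h i :
  iter k f (fun j => x j + h) i = iter k f x i + h.
Proof.
elim: k i => [//|k IH] i /=.
have -> : iter k f (fun j => x j + h) = (fun j => iter k f x j + h).
  by apply: funext => j; rewrite IH.
by rewrite hf.1.
Qed.

Lemma topical_iter_mono k x y : (forall j, x j <= y j) ->
  forall i, iter k f x i <= iter k f y i.
Proof. by move=> xy; elim: k => [//|k IH] i /=; exact: hf.2. Qed.

Lemma topical_iter_subeigen y mu : (forall i, f y i <= y i + mu) ->
  forall k i, iter k f y i <= y i + k%:R * mu.
Proof.
move=> fy; elim=> [|k IH] i /=; first by rewrite mul0r addr0.
apply: le_trans (_ : f (fun j => y j + k%:R * mu) i <= _); first exact: hf.2.
by rewrite hf.1 -(add1n k) natrD mulrDl mul1r addrA lerD2r.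
Qed.

Lemma topical_iter_supereigen y mu : (forall i, y i + mu <= f y i) ->
  forall k i, y i + k%:R * mu <= iter k f y i.
Proof.
move=> fy; elim=> [|k IH] i /=; first by rewrite mul0r addr0.
apply: le_trans (_ : f (fun j => y j + k%:R * mu) i <= _); last exact: hf.2.
by rewrite hf.1 -(add1n k) natrD mulrDl mul1r addrA lerD2r.
Qed.

Lemma topical_subeigen_of_orbit x mu (k : 'I_n -> nat) :
  (forall i, (0 < k i)%N) -> (forall i, iter (k i) f x i <= x i + (k i)%:R * mu) ->
  exists y, forall i, f y i <= y i + mu.
Proof.
move=> k0 xk; pose N := (\max_i k i)%N.
pose g j t := iter j f x t - j%:R * mu.
(* the seed x t is the j = 0 term *)
pose y t := \big[Order.min/x t]_(j < N) g j.+1 t.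
have y_le j t : (j <= N)%N -> y t <= g j t.
  have /bigmin_geP [yx yg] := lexx (y t).
  case: j => [_|j jN]; first by rewrite /g mul0r subr0.
  exact: (yg (Ordinal jN)).
have fy_le j i : (j <= N)%N -> f y i - mu <= g j.+1 i.
  move=> jN; have := hf.2 _ _ (fun t => y_le j t jN) i.
  by rewrite hf.1 /g /= -addn1 natrD mulrDl mul1r opprD addrA lerD2r.
exists y => i; rewrite -lerBlDr; apply/bigmin_geP; split.
- have kN : ((k i).-1 <= N)%N by rewrite (leq_trans (leq_pred _)) ?leq_bigmax.
  by apply: le_trans (fy_le _ _ kN) _; rewrite prednK // /g lerBlDr.
- by move=> j _; exact: fy_le (ltnW (ltn_ord j)).
Qed.

End Topical.

Section CycleTime.
Context {R : realType} {n : nat}.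

Lemma vmax_ge (v : 'I_n.+1 -> R) i : v i <= vmax v.
Proof. exact: le_bigmax. Qed.

Lemma vmax_le (v : 'I_n.+1 -> R) c : (forall i, v i <= c) -> vmax v <= c.
Proof. by move=> vc; apply: bigmax_le. Qed.

Lemma vmax_lt (v : 'I_n.+1 -> R) c : (forall i, v i < c) -> vmax v < c.
Proof. by move=> vc; apply: bigmax_lt. Qed.

Context {f : ('I_n.+1 -> R) -> ('I_n.+1 -> R)}.
Hypothesis hf : topical f.

Let orbit_max k := vmax (iter k f (fun _ => 0)).

Lemma orbit_max_subadd k l : orbit_max (k + l) <= orbit_max k + orbit_max l.
Proof.
rewrite /orbit_max iterD; apply: vmax_le => i.
apply: le_trans (_ : iter k f (fun j => 0 + orbit_max l) i <= _).
  by apply: topical_iter_mono => // j; rewrite add0r vmax_ge.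
by rewrite topical_iter_shift // lerD2r vmax_ge.
Qed.

Lemma orbit_max_lb k : k%:R * - vmax (fun i => - f (fun _ => 0) i) <= orbit_max k.
Proof.
apply: le_trans (vmax_ge _ ord0); rewrite -[leLHS]add0r.
apply: topical_iter_supereigen => // i; rewrite add0r lerNl.
exact: (vmax_ge (fun i => - f _ i)).
Qed.

Lemma cvg_orbit_max : cvgn (fun k => orbit_max k / k%:R).
Proof.
have orbit_max0 : orbit_max 0 <= 0 by apply: vmax_le.
exact: cvgP _ (subadditive_cvg_inf orbit_max0 orbit_max_subadd orbit_max_lb).
Qed.

Lemma upper_cycle_time_le y mu : (forall i, f y i <= y i + mu) ->
  upper_cycle_time f <= mu.
Proof.
move=> fy; pose C := vmax y + vmax (fun i => - y i).
have orbitC k : orbit_max k <= C + k%:R * mu.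
  apply: vmax_le => i.
  apply: le_trans (_ : iter k f (fun j => y j + vmax (fun i => - y i)) i <= _).
    by apply: topical_iter_mono => // j; rewrite -lerBlDl sub0r vmax_ge.
  rewrite topical_iter_shift //.
  have := topical_iter_subeigen hf _ _ fy k i; have := vmax_ge y i; rewrite /C; lra.
apply/ler_addgt0Pr => e e0; apply: limr_le; first exact: cvg_orbit_max.
near=> k.
have kR : 0 < k%:R :> R by rewrite ltr0n; near: k; exact: nbhs_infty_gt.
have Ck : C / k%:R <= e by near: k; exact: near_infty_divn_le.
have : orbit_max k / k%:R <= C / k%:R + mu.
  by rewrite ler_pdivrMr // mulrDl divfK ?gt_eqF // mulrC.
rewrite /orbit_max; lra.
Unshelve. all: by end_near.
Qed.

End CycleTime.

Theorem theorem2p4 (R : realType) (n : nat) (hn : (0 < n)%N)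
  (f : ('I_n -> R) -> ('I_n -> R)) (hf : topical f) (x : 'I_n -> R) :
  exists i : 'I_n, forall k : nat,
    x i + k%:R * upper_cycle_time f <= iter k f x i.
Proof.
case: n hn f hf x => // n _ f hf x; set L := upper_cycle_time f.
apply: contrapT => no_i.
have escape i : exists k, iter k f x i < x i + k%:R * L.
  apply: contrapT => stay; apply: no_i; exists i => k.
  by rewrite leNgt; apply/negP => xk; apply: stay; exists k.
have [k xk] := choice escape.
have k0 i : (0 < k i)%N.
  by rewrite lt0n; apply/eqP => ki; have := xk i; rewrite ki mul0r addr0 ltxx.
pose mu := vmax (fun i => (iter (k i) f x i - x i) / (k i)%:R).
have mu_lt : mu < L.
  by apply: vmax_lt => i; rewrite ltr_pdivrMr ?ltr0n // mulrC ltrBlDl.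
have [y fy] : exists y, forall i, f y i <= y i + mu.
  apply: (topical_subeigen_of_orbit hf x mu k k0) => i.
  by rewrite -lerBlDl mulrC -ler_pdivrMr ?ltr0n // (vmax_ge (fun i => _ / _)).
by have := upper_cycle_time_le hf _ _ fy; rewrite leNgt mu_lt.
Qed.
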